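(* Let $\mathcal S$ be a trajectory set such that for every $S\in\mathcal S$ and every $j\in\mathbb N_0$ the stopped trajectory $(S_{\min\{i,j\}})_{i\in\mathbb N_0}$ belongs to $\mathcal S$. Then (LOP) and (K) hold for $\mathcal S$.
   Context: Fix $s_0\in\mathbb R$. A trajectory set is any set $\mathcal S$ of real sequences $S=(S_j)_{j\in\mathbb N_0}$ with $S_0=s_0$. A simple portfolio $(V,n,H)$ consists of $V\in\mathbb R$, $n\in\mathbb N$ and nonanticipating functions $H_i:\mathcal S\to\mathbb R$, $0\le i\le n-1$ (i.e. $H_i(S)=h_i(S_0,\dots,S_i)$ for some arbitrary $h_i:\mathbb R^{i+1}\to\mathbb R$). Its wealth is $\Pi^{V,n,H}_j(S)=V+\sum_{i=0}^{\min\{j,n\}-1}H_i(S)(S_{i+1}-S_i)$ and $\Pi^{V,n,H}_\infty:=\Pi^{V,n,H}_n$; it is positive if $V\ge0$ and $\Pi^{V,n,H}_\infty\ge0$ on $\mathcal S$. A positive generalized portfolio is a sequence $(V_m,n_m,H_m)_{m\in\mathbb N}$ of positive simple portfolios; it superhedges $f:\mathcal S\to[0,+\infty]$ with initial endowment $\sum_{m\ge1}V_m$ if $f\le\sum_{m=1}^\infty\Pi^{V_m,n_m,H_m}_\infty$ on $\mathcal S$. $\bar I(f)$ is the infimum of initial endowments of positive generalized portfolios superhedging $f$. Let $\mathcal E=\{\Pi^{V,n,H}_\infty\}$ over all simple portfolios. (LOP): whenever two simple portfolios have equal terminal wealth $\Pi_\infty$ at every $S\in\mathcal S$, their initial endowments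 coincide; under (LOP), $I:\mathcal E\to\mathbb R$, $I(\Pi^{V,n,H}_\infty)=V$, is well defined. (K): $I(f)+\bar I(f^-)\le\bar I(f^+)$ for every $f\in\mathcal E$ ($f^\pm$ positive/negative parts). *)

From HB Require Import structures.
From mathcomp Require Import all_boot all_order all_algebra.
From mathcomp Require Import all_classical all_reals.
From mathcomp Require Import ereal sequences.
Set Implicit Arguments. Unset Strict Implicit. Unset Printing Implicit Defensive.
Import Order.TTheory GRing.Theory Num.Theory.
Local Open Scope ring_scope.
Local Open Scope classical_set_scope.

Section Defs.
Variable R : realType.

Definition traj := nat -> R.

Definition trajectory_set (s0 : R) (SS : set traj) : Prop :=
  forall S, SS S -> S 0%N = s0.

Record simple_portfolio := SimplePortfolio {
  sp_V : R;
  sp_n : nat;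
  sp_H : nat -> traj -> R }.

Definition is_simple_portfolio (p : simple_portfolio) : Prop :=
  (0 < sp_n p)%N /\
  forall i, (i < sp_n p)%N ->
    forall S S' : traj, (forall k, (k <= i)%N -> S k = S' k) ->
      sp_H p i S = sp_H p i S'.

Definition wealth (p : simple_portfolio) (j : nat) (S : traj) : R :=
  sp_V p + \sum_(0 <= i < minn j (sp_n p)) sp_H p i S * (S i.+1 - S i).

Definition wealth_inf (p : simple_portfolio) (S : traj) : R :=
  wealth p (sp_n p) S.

Definition positive_portfolio (SS : set traj) (p : simple_portfolio) : Prop :=
  is_simple_portfolio p /\ 0 <= sp_V p /\
  forall S, SS S -> 0 <= wealth_inf p S.

Definition superhedges (SS : set traj) (P : nat -> simple_portfolio)
  (f : traj -> \bar R) : Prop :=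
  (forall m, positive_portfolio SS (P m)) /\
  forall S, SS S -> (f S <= \sum_(0 <= m <oo) ((wealth_inf (P m) S)%:E))%E.

Definition Ibar (SS : set traj) (f : traj -> \bar R) : \bar R :=
  ereal_inf [set (\sum_(0 <= m <oo) ((sp_V (P m))%:E))%E
            | P in [set P | superhedges SS P f]].

Definition LOP (SS : set traj) : Prop :=
  forall p q, is_simple_portfolio p -> is_simple_portfolio q ->
    (forall S, SS S -> wealth_inf p S = wealth_inf q S) -> sp_V p = sp_V q.

Definition represents (SS : set traj) (p : simple_portfolio) (f : traj -> R) :=
  is_simple_portfolio p /\ forall S, SS S -> f S = wealth_inf p S.

(* condition (K): I(f) + Ibar(f^-) <= Ibar(f^+) for every f in E,
   where I(f) = V for any simple portfolio (V,n,H) representing f *)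
Definition condK (SS : set traj) : Prop :=
  forall (f : traj -> R) (p : simple_portfolio), represents SS p f ->
    ((sp_V p)%:E + Ibar SS (fun S => (Num.max (- f S) 0)%:E)
      <= Ibar SS (fun S => (Num.max (f S) 0)%:E))%E.

End Defs.

(* (LOP): the path stopped at date 0 is constant, so there every simple portfolio
   is worth its initial endowment.

   (K): let (V, n, H) represent f, with wealth Pi, and let positive simple
   portfolios P_0, P_1, ... superhedge f^+ at cost c.  As SS is stable under
   stopping, sum_m Pi^(P_m)_j >= (Pi_j)^+ at every date j.  Choose K with
   A_0 := sum_(m<K) V_m - V + eps >= 0 and open a pool with capital A_0 that
   successively absorbs the P_m.  With P_0, ..., P_(M-1) absorbed, the pool keeps
   its capital A nonnegative, and above sum_(m<M) Pi^(P_m) - Pi whenever the total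
   sum_m Pi^(P_m) is finite.  At each date it absorbs finitely many more P_m and
   picks a position that preserves both properties on every continuation of the
   path.  If all continuations have finite totals, it holds the position of
   sum_(m<M') P_m minus (V, n, H) plus the limit of the tail positions
   sum_(m>=M') H^(P_m), where M' makes the tail wealth small.  Otherwise, since
   the total at the next date is affine in the next increment, at most one
   increment leads to a finite total, and absorbing enough P_m covers it.  At
   date n either the total is finite and A >= f^-, or the P_m not yet absorbed
   superhedge f^- on their own.  Sharing the pool among its members in proportion
   to their wealth gives positive simple portfolios superhedging f^- at cost
   A_0 + sum_(m>=K) V_m = c - V + eps. *)

From HB Require Import structures.
From mathcomp Require Import all_boot all_order all_algebra.
From mathcomp Require Import all_classical all_reals.
From mathcomp Require Import ereal sequences topology normedtype.
From mathcomp Require Import ring lra.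
Set Implicit Arguments. Unset Strict Implicit. Unset Printing Implicit Defensive.
Import Order.TTheory GRing.Theory Num.Theory.
Import numFieldNormedType.Exports.
Local Open Scope ring_scope.
Local Open Scope classical_set_scope.

Section Wealth.
Variable R : realType.
Implicit Types (S : traj R) (q : simple_portfolio R).

Definition position q i S : R := if (i < sp_n q)%N then sp_H q i S else 0.
Definition increment S i : R := S i.+1 - S i.
Definition stop S j : traj R := fun i => S (minn i j).
Definition agree_upto S S' i := forall k, (k <= i)%N -> S k = S' k.

Lemma sum_if_ltn (F : nat -> R) a b :
  \sum_(0 <= i < a) (if (i < b)%N then F i else 0) = \sum_(0 <= i < minn a b) F i.
Proof.
have [ab|ba] := leqP a b.
  by apply: eq_big_nat => i /andP[_ ia]; rewrite (leq_trans ia ab).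
rewrite (big_cat_nat (leq0n b) (ltnW ba)) /=.
rewrite [X in _ + X]big1_seq ?addr0; last first.
  by move=> i /andP[_]; rewrite mem_index_iota => /andP[bi _]; rewrite ltnNge bi.
by apply: eq_big_nat => i /andP[_ ->].
Qed.

Lemma wealthE q j S :
  wealth q j S = sp_V q + \sum_(0 <= i < j) position q i S * increment S i.
Proof.
rewrite /wealth -sum_if_ltn; congr (_ + _); apply: eq_bigr => i _.
by rewrite /position; case: ifP; rewrite ?mul0r.
Qed.

Lemma wealth0 q S : wealth q 0 S = sp_V q.
Proof. by rewrite wealthE big_geq ?addr0. Qed.

Lemma wealthS q j S :
  wealth q j.+1 S = wealth q j S + position q j S * increment S j.
Proof. by rewrite !wealthE big_nat_recr //= addrA. Qed.

Lemma agree_upto_sym S S' i : agree_upto S S' i -> agree_upto S' S i.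
Proof. by move=> h k ki; rewrite h. Qed.

Lemma agree_upto_trans S1 S2 S3 i :
  agree_upto S1 S2 i -> agree_upto S2 S3 i -> agree_upto S1 S3 i.
Proof. by move=> h h' k ki; rewrite h ?h'. Qed.

Lemma agree_upto_le S S' i j :
  (j <= i)%N -> agree_upto S S' i -> agree_upto S S' j.
Proof. by move=> ji h k kj; apply: h (leq_trans kj ji). Qed.

Lemma agree_upto_stop S j : agree_upto S (stop S j) j.
Proof. by move=> k kj; rewrite /stop (minn_idPl kj). Qed.

Lemma increment_agree S S' i : agree_upto S S' i.+1 -> increment S i = increment S' i.
Proof. by move=> h; rewrite /increment (h i.+1 (leqnn _)) (h i (leqnSn _)). Qed.

Lemma increment_stop S i : increment (stop S i) i = 0.
Proof. by rewrite /increment /stop minnn (minn_idPr (leqnSn i)) subrr. Qed.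

Section Nonanticipating.
Variable q : simple_portfolio R.
Hypothesis q_simple : is_simple_portfolio q.

Lemma position_agree i S S' : agree_upto S S' i -> position q i S = position q i S'.
Proof. by case: q_simple => _ hq h; rewrite /position; case: ifP => // /hq; apply. Qed.

Lemma wealth_agree j S S' : agree_upto S S' j -> wealth q j S = wealth q j S'.
Proof.
move=> h; rewrite !wealthE; congr (_ + _); apply: eq_big_nat => i /andP[_ ij].
by rewrite (position_agree (agree_upto_le (ltnW ij) h)) (increment_agree (agree_upto_le ij h)).
Qed.

Lemma wealthS_agree i S S' : agree_upto S S' i ->
  wealth q i.+1 S' = wealth q i S + position q i S * increment S' i.
Proof.
by move=> h; rewrite wealthS (wealth_agree (agree_upto_sym h)) (position_agree h).
Qed.

Lemma wealth_inf_stop j S : wealth_inf q (stop S j) = wealth q j S.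
Proof.
rewrite /wealth_inf /wealth minnn minnC -sum_if_ltn; congr (_ + _).
apply: eq_big_nat => i /andP[_ iq]; rewrite /stop.
have [ij|ji] := ltnP i j.
  rewrite (minn_idPl ij); congr (_ * _).
  case: q_simple => _ hq; apply: hq => // k ki.
  by rewrite (minn_idPl (leq_trans ki (ltnW ij))).
by rewrite (minn_idPr (leq_trans ji (leqnSn i))) subrr mulr0.
Qed.

End Nonanticipating.
End Wealth.

Section Sequences.
Variable R : realType.
Implicit Types (u : nat -> R).

Lemma ler_sum_nat_subrange u a b a' b' : (forall m, 0 <= u m) ->
  (a' <= a)%N -> (b <= b')%N ->
  \sum_(a <= m < b) u m <= \sum_(a' <= m < b') u m.
Proof.
move=> u0 a'a bb'; have [ab|ba] := leqP a b; last first.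
  by rewrite big_geq ?(ltnW ba) //; apply: sumr_ge0.
rewrite (big_cat_nat a'a (leq_trans ab bb')) (big_cat_nat ab bb') /=.
by rewrite addrCA lerDl; apply: addr_ge0; apply: sumr_ge0.
Qed.

Lemma sum_le_nneseries u N : (forall m, 0 <= u m) ->
  ((\sum_(0 <= m < N) u m)%:E <= \sum_(0 <= m <oo) (u m)%:E)%E.
Proof.
move=> u0; rewrite -sumEFin.
by apply: nneseries_lim_ge => m _ _; rewrite lee_fin.
Qed.

Lemma nneseries_approx u x eta : (forall m, 0 <= u m) -> 0 < eta ->
  (x%:E <= \sum_(0 <= m <oo) (u m)%:E)%E ->
  exists N, x - eta <= \sum_(0 <= m < N) u m.
Proof.
move=> u0 eta0 xu; apply: contrapT => small.
suff : (\sum_(0 <= m <oo) (u m)%:E <= (x - eta)%:E)%E.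
  by move/(le_trans xu); rewrite lee_fin; lra.
apply: lime_le; first by apply: is_cvg_nneseries => m _ _; rewrite lee_fin.
exists 0%N => // N _ /=; rewrite sumEFin lee_fin leNgt.
by apply/negP => xN; apply: small; exists N; apply: ltW.
Qed.

Lemma bounded_sums_tail u B d M : (forall m, 0 <= u m) ->
  (forall N, \sum_(0 <= m < N) u m <= B) -> 0 < d ->
  exists2 M', (M <= M')%N & forall N, \sum_(M' <= m < N) u m <= d.
Proof.
move=> u0 uB d0; set E := range (fun N => \sum_(0 <= m < N) u m).
have supE : has_sup E by split; [exists (\sum_(0 <= m < 0) u m), 0%N | exists B => _ [N _ <-]].
have [_ [q _ <-] supq] := sup_adherent d0 supE.
exists (maxn M q) => [|N]; first exact: leq_maxl.
have [Nq|qN] := leqP N (maxn M q); first by rewrite big_geq // ltW.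
have : \sum_(0 <= m < N) u m <= sup E by apply: sup_upper_bound => //; exists N.
rewrite (big_cat_nat (leq0n _) (ltnW qN)) /=.
have := ler_sum_nat_subrange u0 (leqnn 0) (leq_maxr M q).
lra.
Qed.

Lemma unbounded_gt u x : ~ (exists B, forall N, u N <= B) -> exists N, x < u N.
Proof.
move=> unb; apply: contrapT => small; apply: unb; exists x => N.
by rewrite leNgt; apply/negP => xu; apply: small; exists N.
Qed.

Lemma bounded_of_lincomb u v w (a b c : R) : c != 0 ->
  (forall N, c * u N = a * v N + b * w N) ->
  (exists B, forall N, `|v N| <= B) -> (exists B, forall N, `|w N| <= B) ->
  exists B, forall N, u N <= B.
Proof.
move=> c0 uvw [Bv vB] [Bw wB]; exists ((`|a| * Bv + `|b| * Bw) / `|c|) => N.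
rewrite ler_pdivlMr ?normr_gt0 //; apply: (@le_trans _ _ `|c * u N|).
  by rewrite mulrC normrM; apply: ler_wpM2l => //; apply: ler_norm.
rewrite uvw; apply: le_trans (ler_normD _ _) _.
by rewrite !normrM; apply: lerD; apply: ler_wpM2l.
Qed.

Lemma limn_mulr u v (t : R) : t != 0 -> (forall N, u N * t = v N) -> cvgn v ->
  limn u * t = limn v.
Proof.
move=> t0 uv cv; have -> : u = v \* cst t^-1.
  by apply: funext => N /=; rewrite -uv mulfK.
rewrite limM //; last exact: is_cvg_cst.
by rewrite lim_cst ?mulfVK //; exact: norm_hausdorff.
Qed.

Lemma nondecreasing_limn_subr_ge u v B e :
  nondecreasing_seq u -> nondecreasing_seq v ->
  (forall N, u N <= B) -> (forall N, v N <= e) ->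
  cvgn (u - v) /\ forall N, u N - e <= limn (u - v).
Proof.
move=> ui vi uB ve.
have cu : cvgn u by apply: nondecreasing_is_cvgn => //; exists B => _ [N _ <-].
have cv : cvgn v by apply: nondecreasing_is_cvgn => //; exists e => _ [N _ <-].
split => [|N]; first exact: is_cvgB.
rewrite limB //; apply: lerB; first exact: nondecreasing_cvgn_le.
by apply: limr_le => //; apply: nearW.
Qed.

End Sequences.

Section Rescaling.
Variable R : realType.

Lemma mul_one_add_ratio (A G t : R) : 0 < A \/ G = 0 ->
  A * (1 + G / A * t) = A + G * t.
Proof.
case=> [A0|->]; last by rewrite !mul0r !addr0 mulr1.
by field; rewrite gt_eqF.
Qed.

Lemma one_add_ratio_ge0 (A G t : R) : 0 < A \/ G = 0 -> 0 <= A + G * t ->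
  0 <= 1 + G / A * t.
Proof.
case=> [A0 AGt|->]; last by rewrite !mul0r addr0.
by rewrite -(pmulr_rge0 _ A0) mul_one_add_ratio //; left.
Qed.

End Rescaling.

Section Construction.
Variable R : realType.
Variables (SS : set (traj R)) (p : simple_portfolio R) (P : nat -> simple_portfolio R).
Hypothesis SS_stop : forall S, SS S -> forall j, SS (stop S j).
Hypothesis p_simple : is_simple_portfolio p.
Hypothesis P_pos : forall m, positive_portfolio SS (P m).
Hypothesis P_hedge : forall S, SS S ->
  ((Num.max (wealth_inf p S) 0)%:E <= \sum_(0 <= m <oo) (wealth_inf (P m) S)%:E)%E.
Implicit Types (S : traj R).

Lemma P_simple m : is_simple_portfolio (P m).
Proof. by case: (P_pos m). Qed.

Lemma wealth_P_ge0 m j S : SS S -> 0 <= wealth (P m) j S.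
Proof.
move=> SSS; rewrite -(wealth_inf_stop (P_simple m)).
by case: (P_pos m) => _ [_]; apply; apply: SS_stop.
Qed.

Lemma superhedge_at j S eta : SS S -> 0 < eta ->
  exists N, wealth p j S - eta <= \sum_(0 <= m < N) wealth (P m) j S.
Proof.
move=> SSS eta0.
have u0 m : 0 <= wealth_inf (P m) (stop S j).
  by case: (P_pos m) => _ [_]; apply; apply: SS_stop.
have [N hN] := nneseries_approx u0 eta0 (P_hedge (SS_stop SSS j)).
exists N; have <- : \sum_(0 <= m < N) wealth_inf (P m) (stop S j) =
                    \sum_(0 <= m < N) wealth (P m) j S.
  by apply: eq_bigr => m _; exact: wealth_inf_stop (P_simple m) j S.
by apply: le_trans hN; rewrite lerD2r (wealth_inf_stop p_simple) le_max lexx.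
Qed.

Definition continuation S i S' := SS S' /\ agree_upto S S' i.

Definition finite_total j S :=
  exists B, forall N, \sum_(0 <= m < N) wealth (P m) j S <= B.

Definition surplus j S M A :=
  A - \sum_(0 <= m < M) wealth (P m) j S + wealth p j S.

Definition absorb i S M M' A := A + \sum_(M <= m < M') wealth (P m) i S.

Lemma continuation_stop S i : SS S -> continuation S i (stop S i).
Proof. by move=> SSS; split; [apply: SS_stop | apply: agree_upto_stop]. Qed.

Lemma sum_wealthS_agree i S S' a b : agree_upto S S' i ->
  \sum_(a <= m < b) wealth (P m) i.+1 S' =
  \sum_(a <= m < b) wealth (P m) i S +
    (\sum_(a <= m < b) position (P m) i S) * increment S' i.
Proof.
move=> h; rewrite mulr_suml -big_split; apply: eq_bigr => m _ /=.
by rewrite (wealthS_agree (P_simple m) h).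
Qed.

Lemma finite_total_stop S i : finite_total i.+1 (stop S i) <-> finite_total i S.
Proof.
have e N : \sum_(0 <= m < N) wealth (P m) i.+1 (stop S i) =
           \sum_(0 <= m < N) wealth (P m) i S.
  by rewrite (sum_wealthS_agree _ _ (@agree_upto_stop _ S i)) increment_stop mulr0 addr0.
by split=> -[B hB]; exists B => N; [rewrite -e | rewrite e].
Qed.

Lemma finite_total_continuation i S S1 S2 S3 :
  continuation S i S1 -> continuation S i S2 -> continuation S i S3 ->
  increment S1 i != increment S2 i ->
  finite_total i.+1 S1 -> finite_total i.+1 S2 -> finite_total i.+1 S3.
Proof.
move=> [SS1 h1] [SS2 h2] [_ h3] t12 [B1 hB1] [B2 hB2].
pose y S' N := \sum_(0 <= m < N) wealth (P m) i.+1 S'.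
have bounded S' B : SS S' -> (forall N, y S' N <= B) -> exists B, forall N, `|y S' N| <= B.
  move=> SS' hB; exists B => N; rewrite ger0_norm ?hB //.
  by apply: sumr_ge0 => m _; apply: wealth_P_ge0.
apply: (@bounded_of_lincomb _ (y S3) (y S1) (y S2)
  (increment S3 i - increment S2 i) (increment S1 i - increment S3 i)
  (increment S1 i - increment S2 i)).
- by rewrite subr_eq0.
- by move=> N; rewrite /y !(sum_wealthS_agree _ _ h1, sum_wealthS_agree _ _ h2,
    sum_wealthS_agree _ _ h3); ring.
- exact: bounded SS1 hB1.
- exact: bounded SS2 hB2.
Qed.

Lemma surplus_continuation i S S' M M' A G : (M <= M')%N -> agree_upto S S' i ->
  surplus i.+1 S' M' (absorb i S M M' A + G * increment S' i) =
  surplus i S M A + (G - \sum_(0 <= m < M') position (P m) i S + position p i S)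
                    * increment S' i.
Proof.
move=> MM' h; rewrite /surplus /absorb (sum_wealthS_agree _ _ h) (wealthS_agree p_simple h).
by rewrite [\sum_(0 <= m < M') wealth _ _ _](big_cat_nat (leq0n M) MM') /=; ring.
Qed.

Lemma surplus_flat i S S' M A : agree_upto S S' i -> increment S' i = 0 ->
  surplus i.+1 S' M A = surplus i S M A.
Proof.
move=> h t0; rewrite /surplus (sum_wealthS_agree _ _ h) (wealthS_agree p_simple h).
by rewrite t0 !mulr0 !addr0.
Qed.

Lemma surplus_same_increment i S S1 S2 M A :
  agree_upto S S1 i -> agree_upto S S2 i -> increment S1 i = increment S2 i ->
  surplus i.+1 S1 M A = surplus i.+1 S2 M A.
Proof.
move=> h1 h2 t12; rewrite /surplus (sum_wealthS_agree _ _ h1) (sum_wealthS_agree _ _ h2).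
by rewrite (wealthS_agree p_simple h1) (wealthS_agree p_simple h2) t12.
Qed.

Lemma tail_wealthS_le_limit_gain i S S' M' e N : SS S -> continuation S i S' ->
  finite_total i.+1 S' -> (forall N, \sum_(M' <= m < N) wealth (P m) i S <= e) ->
  \sum_(M' <= m < N) wealth (P m) i.+1 S' - e <=
    limn (fun N => \sum_(M' <= m < N) position (P m) i S) * increment S' i.
Proof.
move=> SSS [SS' h] [B hB] tail.
have [t0|t0] := eqVneq (increment S' i) 0.
  have -> : \sum_(M' <= m < N) wealth (P m) i.+1 S' = \sum_(M' <= m < N) wealth (P m) i S.
    by rewrite (sum_wealthS_agree _ _ h) t0 mulr0 addr0.
  by rewrite t0 mulr0 subr_le0.
pose a N := \sum_(M' <= m < N) wealth (P m) i.+1 S'.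
pose b N := \sum_(M' <= m < N) wealth (P m) i S.
have [cvg_ab ab_ge] : cvgn (a - b) /\ forall N, a N - e <= limn (a - b).
  apply: nondecreasing_limn_subr_ge tail.
  - by move=> x y xy; apply: ler_sum_nat_subrange => // m; apply: wealth_P_ge0.
  - by move=> x y xy; apply: ler_sum_nat_subrange => // m; apply: wealth_P_ge0.
  - move=> N'; apply: le_trans (hB N'); apply: ler_sum_nat_subrange => // m.
    exact: wealth_P_ge0.
rewrite (limn_mulr t0 _ cvg_ab); first exact: ab_ge.
by move=> N'; rewrite -[(a - b) N']/(a N' - b N') /a /b (sum_wealthS_agree _ _ h); ring.
Qed.

(* A step [d = (M', G)] at date [i] absorbs [P_M, ..., P_(M'-1)] and holds [G]
   units of the asset until date [i+1]; an empty pool must hold nothing, as its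
   position is shared out in proportion to capital. *)
Definition rebalances i S M A (d : nat * R) : Prop :=
  [/\ (M <= d.1)%N, 0 < absorb i S M d.1 A \/ d.2 = 0 &
  forall S', continuation S i S' ->
    0 <= absorb i S M d.1 A + d.2 * increment S' i /\
    (finite_total i.+1 S' ->
      0 < surplus i.+1 S' d.1 (absorb i S M d.1 A + d.2 * increment S' i))].

Lemma rebalances_all_finite i S M A : SS S -> finite_total i S ->
  0 < surplus i S M A -> (forall S', continuation S i S' -> finite_total i.+1 S') ->
  exists d, rebalances i S M A d.
Proof.
move=> SSS [B hB] D0 allfin; set D := surplus i S M A in D0 *.
have e0 : 0 < D / 4 by lra.
have [M' MM' tail] := bounded_sums_tail M (fun m => wealth_P_ge0 m i SSS) hB e0.
have [Gam gain] : exists Gam : R, forall S' N, continuation S i S' ->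
    \sum_(M' <= m < N) wealth (P m) i.+1 S' - D / 4 <= Gam * increment S' i.
  by eexists => S' N cS'; apply: tail_wealthS_le_limit_gain SSS cS' (allfin S' cS') tail.
pose G := Gam + \sum_(0 <= m < M') position (P m) i S - position p i S.
have key S' : continuation S i S' ->
    surplus i.+1 S' M' (absorb i S M M' A + G * increment S' i) = D + Gam * increment S' i.
  by move=> [_ h]; rewrite surplus_continuation // /G; congr (_ + _ * _); ring.
have lower S' : continuation S i S' -> D / 2 <= absorb i S M M' A + G * increment S' i.
  move=> cS'; have [N hN] := superhedge_at i.+1 cS'.1 e0.
  have := gain S' (maxn N M') cS'.
  have := ler_sum_nat_subrange (fun m => wealth_P_ge0 m i.+1 cS'.1) (leqnn 0) (leq_maxl N M').
  rewrite (big_cat_nat (leq0n M') (leq_maxr N M')) /=.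
  have := key S' cS'; rewrite /surplus; lra.
exists (M', G); split => //= [|S' cS'].
  by left; have := lower _ (continuation_stop i SSS); rewrite increment_stop mulr0 addr0; lra.
split=> [|_]; first by have := lower S' cS'; lra.
by have := gain S' M' cS'; rewrite key // big_geq //; lra.
Qed.

Lemma rebalances_some_infinite i S M A S'' : SS S -> 0 <= A ->
  (finite_total i S -> 0 < surplus i S M A) ->
  continuation S i S'' -> ~ finite_total i.+1 S'' ->
  exists d, rebalances i S M A d.
Proof.
move=> SSS A0 hD cS'' infS''.
suff [M' MM' hM'] : exists2 M', (M <= M')%N & forall S', continuation S i S' ->
    finite_total i.+1 S' -> 0 < surplus i.+1 S' M' (absorb i S M M' A).
  exists (M', 0); split=> //= [|S' cS']; first by right.
  rewrite mul0r addr0; split; last exact: hM'.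
  by apply: addr_ge0 => //; apply: sumr_ge0 => m _; apply: wealth_P_ge0.
have cstop := continuation_stop i SSS.
have [finS|infS] := pselect (finite_total i S).
  exists M => // S' cS' finS'.
  have t0 : increment S' i = 0.
    apply: contrapT => /eqP t0; apply: infS''.
    apply: (finite_total_continuation cstop cS' cS'') => //.
      by rewrite increment_stop eq_sym.
    by apply/finite_total_stop.
  by rewrite /absorb big_geq // addr0 (surplus_flat _ _ cS'.2 t0); apply: hD.
have [[Ss [cSs finSs]]|nofin] :=
    pselect (exists Ss, continuation S i Ss /\ finite_total i.+1 Ss); last first.
  by exists M => // S' cS' finS'; exfalso; apply: nofin; exists S'.
(* The continuations with finite total share one increment, hence one surplus,
   which absorbing enough [P_m] makes positive since the total at [i] is infinite. *)
have same S' : continuation S i S' -> finite_total i.+1 S' ->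
    increment S' i = increment Ss i.
  move=> cS' finS'; apply: contrapT => /eqP neq; apply: infS.
  by apply/finite_total_stop; apply: (finite_total_continuation cS' cSs cstop neq).
have [Bs hBs] := finSs.
have [N hN] := unbounded_gt
  (Bs - (A - \sum_(0 <= m < M) wealth (P m) i S) - wealth p i.+1 Ss) infS.
exists (maxn N M) => [|S' cS' finS']; first exact: leq_maxr.
rewrite (surplus_same_increment _ _ cS'.2 cSs.2 (same S' cS' finS')) /surplus /absorb.
have := hBs (maxn N M).
have := ler_sum_nat_subrange (fun m => wealth_P_ge0 m i SSS) (leqnn 0) (leq_maxl N M).
rewrite (big_cat_nat (leq0n M) (leq_maxr N M)) /=; lra.
Qed.

Lemma rebalances_exists i S M A : SS S -> 0 <= A ->
  (finite_total i S -> 0 < surplus i S M A) -> exists d, rebalances i S M A d.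
Proof.
move=> SSS A0 hD.
have [allfin|] := pselect (forall S', continuation S i S' -> finite_total i.+1 S').
  have finS : finite_total i S.
    by apply/finite_total_stop; apply/allfin/continuation_stop.
  exact: rebalances_all_finite (hD finS) allfin.
move=> /existsNP[S'' /not_implyP[cS'' infS'']].
exact: rebalances_some_infinite cS'' infS''.
Qed.


Lemma continuation_agree S S' i : agree_upto S S' i ->
  continuation S i = continuation S' i.
Proof.
move=> h; apply/funext => S''; apply/propext.
split=> -[SS'' h'']; split=> //; last exact: agree_upto_trans h h''.
exact: agree_upto_trans (agree_upto_sym h) h''.
Qed.

Lemma absorb_agree i S S' M M' A : agree_upto S S' i ->
  absorb i S M M' A = absorb i S' M M' A.
Proof.
move=> h; rewrite /absorb; congr (_ + _); apply: eq_bigr => m _.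
exact: wealth_agree (P_simple m) _ _ _ h.
Qed.

Section Hedge.
Variables (K : nat) (A0 : R).
Hypothesis A0_ge0 : 0 <= A0.
Hypothesis A0_surplus : \sum_(0 <= m < K) sp_V (P m) - sp_V p < A0.

Definition rebalancing S i M A := xget (0%N, 0) (rebalances i S M A).

(* [(M, A)]: the pool has absorbed [P_0, ..., P_(M-1)] and has capital [A]. *)
Fixpoint pool_state i S : nat * R :=
  if i is i'.+1 then
    let st := pool_state i' S in let d := rebalancing S i' st.1 st.2 in
    (d.1, absorb i' S st.1 d.1 st.2 + d.2 * increment S i')
  else (K, A0).

Definition pool_step i S := rebalancing S i (pool_state i S).1 (pool_state i S).2.

Definition pool_ratio i S :=
  (pool_step i S).2 / absorb i S (pool_state i S).1 (pool_step i S).1 (pool_state i S).2.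

(* Index [0] is the pool itself; [P_m] with [m < K] contribute nothing, their
   endowments being accounted for in [A0]. *)
Definition initial_capital k : R :=
  if k is m.+1 then (if (K <= m)%N then sp_V (P m) else 0) else A0.

(* Members of the pool hold its position per unit of capital; the others copy
   their [P_m]. *)
Definition hedge_position (w : R) k i S : R :=
  if k is m.+1 then
    if (m < (pool_step i S).1)%N then w * pool_ratio i S else position (P m) i S
  else w * pool_ratio i S.

Fixpoint hedge_wealth k i S : R :=
  if i is i'.+1 then
    hedge_wealth k i' S + hedge_position (hedge_wealth k i' S) k i' S * increment S i'
  else initial_capital k.

Definition hedge_portfolio k : simple_portfolio R :=
  SimplePortfolio (initial_capital k) (sp_n p)
    (fun i S => hedge_position (hedge_wealth k i S) k i S).

Lemma rebalancing_agree S S' i M A : agree_upto S S' i ->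
  rebalancing S i M A = rebalancing S' i M A.
Proof.
move=> h; rewrite /rebalancing; congr xget; apply/funext => d.
by rewrite /rebalances (continuation_agree h) (absorb_agree _ _ _ h).
Qed.

Lemma pool_state_agree i S S' : agree_upto S S' i -> pool_state i S = pool_state i S'.
Proof.
elim: i => [//|i IH] h /=; have hi := agree_upto_le (leqnSn i) h.
by rewrite (IH hi) (rebalancing_agree _ _ hi) (absorb_agree _ _ _ hi) (increment_agree h).
Qed.

Lemma pool_step_agree i S S' : agree_upto S S' i -> pool_step i S = pool_step i S'.
Proof. by move=> h; rewrite /pool_step (pool_state_agree h) (rebalancing_agree _ _ h). Qed.

Lemma pool_ratio_agree i S S' : agree_upto S S' i -> pool_ratio i S = pool_ratio i S'.
Proof.
move=> h; rewrite /pool_ratio (pool_step_agree h) (pool_state_agree h).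
by rewrite (absorb_agree _ _ _ h).
Qed.

Lemma hedge_position_agree w k i S S' : agree_upto S S' i ->
  hedge_position w k i S = hedge_position w k i S'.
Proof.
move=> h; rewrite /hedge_position (pool_step_agree h) (pool_ratio_agree h).
by case: k => // m; rewrite (position_agree (P_simple m) h).
Qed.

Lemma hedge_wealth_agree k i S S' : agree_upto S S' i ->
  hedge_wealth k i S = hedge_wealth k i S'.
Proof.
elim: i => [//|i IH] h /=; have hi := agree_upto_le (leqnSn i) h.
by rewrite (IH hi) (hedge_position_agree _ _ hi) (increment_agree h).
Qed.

Lemma hedge_portfolio_simple k : is_simple_portfolio (hedge_portfolio k).
Proof.
split=> [|i _ S S' h /=]; first by case: p_simple.
by rewrite (hedge_wealth_agree _ h) (hedge_position_agree _ _ h).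
Qed.

Lemma wealth_hedge_portfolio k i S : (i <= sp_n p)%N ->
  wealth (hedge_portfolio k) i S = hedge_wealth k i S.
Proof.
elim: i => [|i IH] i_n; first by rewrite wealth0.
by rewrite wealthS IH ?(ltnW i_n) // /position /= i_n.
Qed.

Lemma initial_capital_ge0 k : 0 <= initial_capital k.
Proof. by case: k => [|m] //=; case: ifP => // _; case: (P_pos m) => _ []. Qed.

Lemma hedge_wealth_absorbed k i S : (k <= (pool_step i S).1)%N ->
  hedge_wealth k i.+1 S = hedge_wealth k i S * (1 + pool_ratio i S * increment S i).
Proof. by case: k => [|m] /= => [_|->]; ring. Qed.

Lemma hedge_wealth_follower m i S : ((pool_step i S).1 <= m)%N ->
  hedge_wealth m.+1 i.+1 S = hedge_wealth m.+1 i S + position (P m) i S * increment S i.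
Proof. by move=> Mm /=; rewrite ltnNge Mm. Qed.

Definition pool_invariant i S M A :=
  [/\ 0 <= A, finite_total i S -> 0 < surplus i S M A,
      A = hedge_wealth 0 i S + \sum_(0 <= m < M) hedge_wealth m.+1 i S,
      forall m, (M <= m)%N -> hedge_wealth m.+1 i S = wealth (P m) i S &
      forall k, 0 <= hedge_wealth k i S].

Lemma pool_invariant0 S : pool_invariant 0 S K A0.
Proof.
split=> //= [|||k]; last exact: initial_capital_ge0.
- move=> _; rewrite /surplus.
  have -> : \sum_(0 <= m < K) wealth (P m) 0 S = \sum_(0 <= m < K) sp_V (P m).
    by apply: eq_bigr => m _; apply: wealth0.
  rewrite wealth0; move: A0_surplus; lra.
- rewrite big1_seq ?addr0 // => m /andP[_]; rewrite mem_index_iota => /andP[_ mK].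
  by rewrite leqNgt mK.
- by move=> m Km; rewrite Km wealth0.
Qed.

Lemma pool_invariantS i S : SS S ->
  pool_invariant i S (pool_state i S).1 (pool_state i S).2 ->
  pool_invariant i.+1 S (pool_state i.+1 S).1 (pool_state i.+1 S).2.
Proof.
move=> SSS inv.
have [MM' A'_pos cont] :
    rebalances i S (pool_state i S).1 (pool_state i S).2 (pool_step i S).
  by case: inv => A_ge0 hD _ _ _; apply: xgetPex; apply: rebalances_exists.
have [A''_ge0 surplus'] : _ /\ _ := cont S (conj SSS (fun _ _ => erefl)).
case: inv => _ _ eA follow W_ge0; rewrite [pool_state i.+1 S]/=.
set M := (pool_state i S).1 in MM' A'_pos A''_ge0 surplus' eA follow *.
set A := (pool_state i S).2 in A'_pos A''_ge0 surplus' eA *.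
set M' := (pool_step i S).1 in MM' A'_pos A''_ge0 surplus' *.
have factor : absorb i S M M' A * (1 + pool_ratio i S * increment S i) =
    absorb i S M M' A + (pool_step i S).2 * increment S i.
  exact: mul_one_add_ratio.
have factor_ge0 : 0 <= 1 + pool_ratio i S * increment S i by exact: one_add_ratio_ge0.
split=> // [|m M'm|k].
- rewrite hedge_wealth_absorbed // -factor /absorb.
  have -> : \sum_(0 <= m < M') hedge_wealth m.+1 i.+1 S =
      (\sum_(0 <= m < M') hedge_wealth m.+1 i S) * (1 + pool_ratio i S * increment S i).
    rewrite mulr_suml; apply: eq_big_nat => m /andP[_ mM'].
    exact: hedge_wealth_absorbed.
  rewrite (big_cat_nat (leq0n M) MM') /= eA.
  have -> : \sum_(M <= m < M') hedge_wealth m.+1 i S = \sum_(M <= m < M') wealth (P m) i S.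
    by apply: eq_big_nat => m /andP[Mm _]; apply: follow.
  ring.
- by rewrite hedge_wealth_follower // follow ?(leq_trans MM' M'm) // -wealthS.
- have [kM'|M'k] := leqP k M'.
    by rewrite hedge_wealth_absorbed //; apply: mulr_ge0.
  case: k M'k => // m M'm.
  rewrite hedge_wealth_follower // follow ?(leq_trans MM' M'm) // -wealthS.
  exact: wealth_P_ge0.
Qed.

Lemma pool_state_invariant i S : SS S ->
  pool_invariant i S (pool_state i S).1 (pool_state i S).2.
Proof.
by move=> SSS; elim: i => [|i IH]; [apply: pool_invariant0 | apply: pool_invariantS].
Qed.

Lemma hedge_portfolio_positive k : positive_portfolio SS (hedge_portfolio k).
Proof.
split; first exact: hedge_portfolio_simple.
split=> [|S SSS]; first exact: initial_capital_ge0.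
rewrite /wealth_inf wealth_hedge_portfolio //.
by have [_ _ _ _] := pool_state_invariant (sp_n p) SSS.
Qed.

Lemma hedge_portfolio_superhedges :
  superhedges SS hedge_portfolio (fun S => (Num.max (- wealth_inf p S) 0)%:E).
Proof.
split=> [|S SSS]; first exact: hedge_portfolio_positive.
have wQ k : wealth_inf (hedge_portfolio k) S = hedge_wealth k (sp_n p) S.
  exact: wealth_hedge_portfolio.
have Q_ge0 k : 0 <= wealth_inf (hedge_portfolio k) S.
  by case: (hedge_portfolio_positive k) => _ [_]; apply.
have [A_ge0 hD eA follow _] := pool_state_invariant (sp_n p) SSS.
set M := (pool_state (sp_n p) S).1 in hD eA follow.
set A := (pool_state (sp_n p) S).2 in A_ge0 hD eA.
have partial N : (M <= N)%N ->
    \sum_(0 <= k < N.+1) wealth_inf (hedge_portfolio k) S =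
    A + \sum_(M <= m < N) wealth (P m) (sp_n p) S.
  move=> MN; rewrite big_nat_recl // (big_cat_nat (leq0n M) MN) /= eA wQ addrA.
  congr (_ + _ + _); first by apply: eq_bigr => m _; rewrite wQ.
  by apply: eq_big_nat => m /andP[Mm _]; rewrite wQ follow.
have -> : wealth_inf p S = wealth p (sp_n p) S by [].
have [finS|infS] := pselect (finite_total (sp_n p) S).
  apply: le_trans _ (sum_le_nneseries M.+1 Q_ge0).
  rewrite partial // big_geq // addr0 lee_fin ge_max A_ge0 andbT.
  have := hD finS; have : 0 <= \sum_(0 <= m < M) wealth (P m) (sp_n p) S.
    by apply: sumr_ge0 => m _; apply: wealth_P_ge0.
  rewrite /surplus; lra.
have [N hN] := unbounded_gt
  (\sum_(0 <= m < M) wealth (P m) (sp_n p) S + Num.max (- wealth p (sp_n p) S) 0) infS.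
apply: le_trans _ (sum_le_nneseries (maxn N M).+1 Q_ge0).
rewrite partial ?leq_maxr // lee_fin.
have := ler_sum_nat_subrange (fun m => wealth_P_ge0 m (sp_n p) SSS) (leqnn 0) (leq_maxl N M).
rewrite (big_cat_nat (leq0n M) (leq_maxr N M)) /=; lra.
Qed.

Lemma hedge_portfolio_cost :
  (\sum_(0 <= k <oo) (sp_V (hedge_portfolio k))%:E =
   A0%:E + \sum_(K <= m <oo) (sp_V (P m))%:E)%E.
Proof.
have V_ge0 k : (0 <= (sp_V (hedge_portfolio k))%:E)%E by rewrite lee_fin initial_capital_ge0.
rewrite nneseries_recl // -nneseries_addn //; congr (_ + _)%E.
rewrite [RHS]eseries_cond [RHS]eseries_mkcond; apply: eq_eseriesr => m _.
by rewrite addn1 /=; case: ifP.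
Qed.

End Hedge.

Lemma superhedge_negative_part K A0 : 0 <= A0 ->
  \sum_(0 <= m < K) sp_V (P m) - sp_V p < A0 ->
  exists Q, superhedges SS Q (fun S => (Num.max (- wealth_inf p S) 0)%:E) /\
    (\sum_(0 <= k <oo) (sp_V (Q k))%:E = A0%:E + \sum_(K <= m <oo) (sp_V (P m))%:E)%E.
Proof.
move=> A0_ge0 A0_surplus; exists (hedge_portfolio K A0).
by split; [exact: hedge_portfolio_superhedges | exact: hedge_portfolio_cost].
Qed.

End Construction.

Section StoppingClosed.
Variable R : realType.
Variable SS : set (traj R).
Hypothesis SS_stop : forall S, SS S -> forall j, SS (stop S j).
Variable S0 : traj R.
Hypothesis SS_S0 : SS S0.

Lemma stopping_closed_LOP : LOP SS.
Proof.
move=> q1 q2 q1_simple q2_simple eq_wealth; have := eq_wealth _ (SS_stop SS_S0 0).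
by rewrite !wealth_inf_stop // !wealth0.
Qed.

Lemma stopping_closed_condK : condK SS.
Proof.
move=> f p [p_simple fp]; apply: le_ereal_inf_tmp => _ [P [P_pos P_hedge] <-].
have hedge S : SS S ->
    ((Num.max (wealth_inf p S) 0)%:E <= \sum_(0 <= m <oo) (wealth_inf (P m) S)%:E)%E.
  by move=> SSS; rewrite -fp //; apply: P_hedge.
apply/lee_addgt0Pr => e e0.
have [K VK] := superhedge_at SS_stop p_simple P_pos hedge 0 SS_S0 e0.
have sumV : \sum_(0 <= m < K) wealth (P m) 0 S0 = \sum_(0 <= m < K) sp_V (P m).
  by apply: eq_bigr => m _; apply: wealth0.
rewrite sumV wealth0 in VK.
pose A0 := \sum_(0 <= m < K) sp_V (P m) - sp_V p + e.
have [A0_ge0 A0_surplus] : 0 <= A0 /\ \sum_(0 <= m < K) sp_V (P m) - sp_V p < A0.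
  by rewrite /A0; split; lra.
have [Q [[Q_pos Q_hedge] Q_cost]] :=
  superhedge_negative_part SS_stop p_simple P_pos hedge A0_ge0 A0_surplus.
have IQ : (Ibar SS (fun S => (Num.max (- f S) 0)%:E) <=
           A0%:E + \sum_(K <= m <oo) (sp_V (P m))%:E)%E.
  rewrite -Q_cost; apply: ereal_inf_lbound; exists Q => //.
  by split=> // S SSS; rewrite fp //; apply: Q_hedge.
apply: le_trans (leeD2l _ IQ) _.
have V_ge0 m : (0 <= (sp_V (P m))%:E)%E by rewrite lee_fin; case: (P_pos m) => _ [].
rewrite (nneseries_split 0 K) // add0n sumEFin addeA -EFinD.
have -> : sp_V p + A0 = \sum_(0 <= m < K) sp_V (P m) + e by rewrite /A0; ring.
by rewrite EFinD addeAC.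
Qed.

End StoppingClosed.

Unset Implicit Arguments.

Theorem corollary5p2 (R : realType) (s0 : R) (SS : set (traj R)) :
  trajectory_set s0 SS ->
  SS !=set0 ->
  (forall S, SS S -> forall j : nat, SS (fun i => S (minn i j))) ->
  LOP SS /\ condK SS.
Proof.
move=> _ [S0 SS_S0] SS_stop.
split; first exact: stopping_closed_LOP SS_stop S0 SS_S0.
exact: stopping_closed_condK SS_stop S0 SS_S0.
Qed.
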